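(* There exists an absolute constant $C>0$ such that the following holds. Let $B$ be a finite set of consecutive integers, let $1\le m\le|B|$ and let $I=(i_1,\dots,i_m)\subseteq B$ be an increasing sequence of integers. For an integer $s\ge1$ define $$\mathcal{J}'_{s,I}=\Big\{(j_1,\dots,j_m)\in\mathbb{Z}^m: \sum_{k=1}^m j_k=s,\ j_k\ge 0\text{ for all }k,\ j_{k+1}-j_k\le i_{k+1}-i_k\text{ for all }1\le k\le m-1\Big\}.$$ Then $$|\mathcal{J}'_{s,I}|\le\left(\frac{C}{m^2}\right)^{m-1}\left(s^{m-1}+(m|B|)^{m-1}\right).$$ *)

From HB Require Import structures.
From mathcomp Require Import all_boot all_order all_algebra.
From Stdlib Require Rdefinitions.
From mathcomp Require Import Rstruct.
Set Implicit Arguments. Unset Strict Implicit. Unset Printing Implicit Defensive.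
Import Order.TTheory GRing.Theory Num.Theory.
Local Open Scope ring_scope.

Definition blockB (a : int) (n : nat) : seq int := [seq a + i%:Z | i <- iota 0 n].

Definition incr_in (a : int) (n m : nat) (I : seq int) : Prop :=
  size I = m /\ sorted <%R I /\ all (fun x => x \in blockB a n) I.

(* Since j_k >= 0 and the sum is s, every
   j_k lies in {0,...,s}, so we enumerate inside m.-tuple 'I_s.+1. *)
Definition Jprime (m s : nat) (I : seq int) : {set m.-tuple 'I_s.+1} :=
  [set j : m.-tuple 'I_s.+1 |
     ((\sum_(k < m) (tnth j k : nat))%N == s) &&
     [forall k : 'I_m, (k.+1 < m)%N ==>
        (let js := [seq (val x : nat)%:Z | x <- (j : seq (ordinal s.+1))] in
         nth 0 js k.+1 - nth 0 js k <= nth 0 I k.+1 - nth 0 I k)]].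

From HB Require Import structures.
From mathcomp Require Import all_boot all_order all_algebra.
From Stdlib Require Rdefinitions Rtrigo_def Exp_prop Rpower.
From mathcomp Require Import Rstruct zify ring lra.
Import Order.TTheory GRing.Theory Num.Theory.
Set Implicit Arguments. Unset Strict Implicit. Unset Printing Implicit Defensive.

(* Shifting [j_k] by [i_m - i_k] turns an element of J'_{s,I} into a
   nonincreasing sequence of m naturals with sum [T = s + sum_k (i_m - i_k)]
   and [T <= s + m|B|]; reversed, it is a partition of [T] into at most m
   parts.  Counting those by their smallest part [x] gives the recursion
   [p_{m+1}(T) = sum_x p_m(T - (m+1) x)], and comparing the sum with the
   integral of [t^m] shows [p_m(T) <= (9 (T + m^2) / m^2)^(m-1)], the factor
   [9] coming from [(1 + 1/m)^(2m) <= e^2 <= 9]. *)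

Section ExpBound.
Local Open Scope ring_scope.

Lemma expn_succ_le n : (0 < n)%N -> (n.+1 ^ n <= 3 * n ^ n)%N.
Proof.
move=> n_gt0; rewrite -(ler_nat Rdefinitions.R) natrM !natrX.
have n_pos : 0 < n%:R :> Rdefinitions.R by rewrite ltr0n.
set x : Rdefinitions.R := n%:R^-1.
have x_ge0 : 0 <= x by rewrite invr_ge0 ltW.
have -> : n.+1%:R = n%:R * (1 + x) :> Rdefinitions.R.
  by rewrite mulrDr mulr1 mulfV ?gt_eqF // -addn1 natrD.
rewrite exprMn mulrC ler_pM2r ?exprn_gt0 //.
have exp_ge : 1 + x <= Rtrigo_def.exp x by apply/RleP; exact: Rpower.exp_ineq1_le.
apply: le_trans (lerXn2r _ _ _ exp_ge) _; rewrite ?nnegrE ?addr_ge0 //.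
  exact/ltW/RltP/Exp_prop.exp_pos.
have -> : Rtrigo_def.exp x ^+ n = Rtrigo_def.exp 1.
  by rewrite expRX -mulr_natr mulVf ?gt_eqF.
by apply/RleP; exact: Rpower.exp_le_3.
Qed.

End ExpBound.

Local Open Scope nat_scope.

Lemma expnD_bernoulli y d k : y ^ k.+1 + d * k.+1 * y ^ k <= (y + d) ^ k.+1.
Proof.
elim: k => [|k IH]; first by rewrite !expn1 expn0 !muln1.
rewrite (expnS (y + d)) (expnS y k.+1).
apply: leq_trans (leq_mul (leqnn (y + d)) IH).
rewrite (expnS y k); nia.
Qed.

(* A Riemann sum of the derivative of [t ^ k.+1], taken at the left ends of
   the intervals [[A - d x, A - d x + d]]. *)
Lemma sum_deriv_expn_le d k A X : d * X <= A ->
  \sum_(0 <= x < X.+1) d * k.+1 * (A - d * x) ^ k + (A - d * X) ^ k.+1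
    <= (A + d) ^ k.+1.
Proof.
elim: X => [|X IH] dX_le; first by rewrite big_nat1 muln0 subn0 addnC expnD_bernoulli.
rewrite big_nat_recr //= -addnA.
apply: leq_trans (IH (leq_trans (leq_mul (leqnn d) (leqnSn X)) dX_le)).
have -> : A - d * X = (A - d * X.+1) + d by rewrite mulnS; lia.
by rewrite leq_add2l addnC expnD_bernoulli.
Qed.

Lemma sqr_expn_succ_le k :
  (k.+2 ^ 2) ^ k.+1 <= 9 * (k.+1 ^ 2) ^ k * (k.+2 * k.+1).
Proof.
have := expn_succ_le (ltn0Sn k); rewrite (expnS k.+1 k).
rewrite -!expnM !(mulnC 2) !expnM.
set P := k.+1 ^ k; set Q := k.+2 ^ k.+1 => Q_le.
apply: leq_trans (leq_mul Q_le Q_le) _.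
have -> : 3 * (k.+1 * P) * (3 * (k.+1 * P)) = 9 * (P * P) * (k.+1 * k.+1) by ring.
by rewrite leq_mul2l leq_mul2r leqnSn !orbT.
Qed.

Lemma leq_expn2r x y k : x <= y -> x ^ k <= y ^ k.
Proof. by move=> xy; elim: k => // k IH; rewrite !expnS leq_mul. Qed.

Lemma expnD_double_le x y k : (x + 2 * y) ^ k <= 3 ^ k * (x ^ k + y ^ k).
Proof.
have [xy|yx] := leqP x y.
  apply: (@leq_trans ((3 * y) ^ k)); first by apply: leq_expn2r; lia.
  by rewrite expnMn leq_mul2l leq_addl orbT.
apply: (@leq_trans ((3 * x) ^ k)); first by apply: leq_expn2r; lia.
by rewrite expnMn leq_mul2l leq_addr orbT.
Qed.

(* The nondecreasing sequences of [m] naturals with sum [T]; the tail of such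
   a sequence is its head [x] plus one of length [m - 1] and sum [T - m x]. *)
Fixpoint partitions (m T : nat) : seq (seq nat) :=
  if m is m'.+1 then
    [seq x :: map (addn x) r | x <- iota 0 (T %/ m).+1, r <- partitions m' (T - m * x)]
  else if T == 0 then [:: [::]] else [::].

Lemma partitionsS m T : partitions m.+1 T =
  [seq x :: map (addn x) r
     | x <- iota 0 (T %/ m.+1).+1, r <- partitions m (T - m.+1 * x)].
Proof. by []. Qed.

Lemma sumn_map_addn x t : sumn (map (addn x) t) = size t * x + sumn t.
Proof. by elim: t => //= y t ->; rewrite mulSn; lia. Qed.

Lemma mem_partitions m T h :
  size h = m -> sorted leq h -> sumn h = T -> h \in partitions m T.
Proof.
elim: m T h => [|m IH] T [|x t] //; first by move=> _ _ /= <-.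
rewrite partitionsS => -[size_t] sorted_xt sum_xt.
have x_le : all (leq x) t := order_path_min leq_trans sorted_xt.
set t' := map (subn^~ x) t.
have t_eq : t = map (addn x) t'.
  rewrite /t' -map_comp map_id_in // => z zt /=; rewrite subnKC //; exact: (allP x_le).
have size_t' : size t' = m by rewrite size_map.
have sum_t : T = m.+1 * x + sumn t'.
  by rewrite -sum_xt /= {1}t_eq sumn_map_addn size_t'; lia.
apply/flatten_mapP; exists x.
  by rewrite mem_iota /= add0n ltnS leq_divRL //; lia.
apply/mapP; exists t'; last by rewrite -t_eq.
apply: IH => //; last by lia.
rewrite /t' sorted_map; apply: sub_sorted (path_sorted sorted_xt) => a b /=.
exact: leq_sub2r.
Qed.

Lemma size_partitions1 T : size (partitions 1 T) <= 1.
Proof.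
rewrite partitionsS size_allpairs_dep sumnE big_map divn1.
have -> : iota 0 T.+1 = index_iota 0 T.+1 by rewrite /index_iota subn0.
rewrite big_nat_recr //= mul1n subnn big_nat_cond big1 // => i /andP[/andP[_ lt_iT] _].
by rewrite mul1n; case: ifP => //; rewrite subn_eq0 leqNgt lt_iT.
Qed.

Lemma size_partitions k T :
  size (partitions k.+1 T) * (k.+1 ^ 2) ^ k <= 9 ^ k * (T + k.+1 ^ 2) ^ k.
Proof.
elim: k T => [|k IH] T; first by rewrite !expn0 !muln1 size_partitions1.
rewrite partitionsS size_allpairs_dep sumnE big_map big_distrl.
set X := T %/ k.+2; set A := T + k.+1 ^ 2.
have dX_le : k.+2 * X <= T by rewrite mulnC leq_divM.
have term_le x : x <= X ->
    size (partitions k.+1 (T - k.+2 * x)) * (k.+2 ^ 2) ^ k.+1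
    <= 9 ^ k.+1 * (k.+2 * k.+1 * (A - k.+2 * x) ^ k).
  move=> le_xX.
  have dx_le : k.+2 * x <= T by apply: leq_trans dX_le; rewrite leq_mul2l le_xX.
  apply: leq_trans (leq_mul (leqnn _) (sqr_expn_succ_le k)) _.
  have -> : A - k.+2 * x = T - k.+2 * x + k.+1 ^ 2 by rewrite /A; lia.
  have := IH (T - k.+2 * x); rewrite (expnS 9).
  set S := size _; set P := (_ ^ 2) ^ k; set R := (_ + _) ^ k; nia.
apply: (@leq_trans (\sum_(0 <= x < X.+1) 9 ^ k.+1 * (k.+2 * k.+1 * (A - k.+2 * x) ^ k))).
  rewrite /index_iota subn0 big_seq [leqRHS]big_seq; apply: leq_sum => x.
  by rewrite mem_iota add0n ltnS => /andP[_]; exact: term_le.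
rewrite -big_distrr leq_mul2l; apply/orP; right.
have dX_leA : k.+2 * X <= A by apply: leq_trans dX_le (leq_addr _ _).
apply: leq_trans (leq_trans (leq_addr _ _) (sum_deriv_expn_le k dX_leA)) _.
by apply: leq_expn2r; rewrite /A -addnA leq_add2l; nia.
Qed.

Lemma absz_sub_blockB a n x y :
  x \in blockB a n -> y \in blockB a n -> absz (y - x)%R < n.
Proof.
move=> /mapP[p + ->] /mapP[q + ->]; rewrite !mem_iota !add0n => lt_pn lt_qn.
rewrite -ltz_nat abszE; have -> : (a + q%:Z - (a + p%:Z) = q%:Z - p%:Z)%R by ring.
rewrite ltr_norml; apply/andP; split; lia.
Qed.

Section ShiftToPartition.
Variables (m s : nat) (I : seq int).

Definition gap k := absz (I`_m.-1 - I`_k)%R.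

Definition jseq (j : m.-tuple 'I_s.+1) : seq nat := [seq val x | x <- j].

Definition shift_rev j := rev [seq nth 0 (jseq j) k + gap k | k <- iota 0 m].

Lemma size_shift_rev j : size (shift_rev j) = m.
Proof. by rewrite size_rev size_map size_iota. Qed.

Lemma shift_rev_inj : injective shift_rev.
Proof.
move=> j1 j2 /(can_inj (@revK _)) eq_shift.
apply/val_inj/(inj_map val_inj)/(@eq_from_nth _ 0).
  by rewrite !size_map !size_tuple.
rewrite size_map size_tuple => k lt_km.
move: (congr1 (nth 0 ^~ k) eq_shift).
by rewrite !(nth_map 0) ?size_iota // nth_iota // => /addIn.
Qed.

Lemma sumn_shift_rev j :
  j \in Jprime m s I -> sumn (shift_rev j) = s + \sum_(0 <= k < m) gap k.
Proof.
rewrite inE => /andP[/eqP sum_j _].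
rewrite sumn_rev sumnE big_map big_split /= /index_iota subn0 -sum_j big_tuple.
congr (_ + _); apply: eq_bigr => k _.
by rewrite (tnth_nth 0) nth_iota // add0n (nth_map ord0) ?size_tuple // -tnth_nth.
Qed.

Hypotheses (sorted_I : sorted <%R I) (size_I : size I = m).

Lemma gapE k : k < m -> Posz (gap k) = (I`_m.-1 - I`_k)%R.
Proof.
move=> lt_km; rewrite /gap gez0_abs // subr_ge0.
have lt_trans_int : transitive (@Order.lt _ int) by move=> ???; apply: lt_trans.
have [lt_k|gt_k|-> //] := ltngtP k m.-1; last by lia.
by apply/ltW/(sorted_ltn_nth lt_trans_int 0 sorted_I); rewrite // inE size_I; lia.
Qed.

Lemma sorted_shift_rev j : j \in Jprime m s I -> sorted leq (shift_rev j).
Proof.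
rewrite inE => /andP[_ /forallP slope_j].
rewrite rev_sorted; apply/(sortedP 0) => k; rewrite size_map size_iota => lt_k1m.
have lt_km : k < m by apply: ltnW.
rewrite !(nth_map 0) ?size_iota // !nth_iota // !add0n.
rewrite -lez_nat !PoszD !gapE //.
have := slope_j (Ordinal lt_km); rewrite /= lt_k1m /= /jseq !(nth_map ord0) ?size_tuple //.
lra.
Qed.

Lemma card_Jprime_le :
  #|Jprime m s I| <= size (partitions m (s + \sum_(0 <= k < m) gap k)).
Proof.
rewrite cardE -(size_map shift_rev); apply: uniq_leq_size.
  by rewrite (map_inj_uniq shift_rev_inj) enum_uniq.
move=> y /mapP[j]; rewrite mem_enum => j_in ->.
apply: mem_partitions; first exact: size_shift_rev.
  exact: sorted_shift_rev.
exact: sumn_shift_rev.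
Qed.

Lemma sum_gap_le a n :
  all (fun x => x \in blockB a n) I -> \sum_(0 <= k < m) gap k <= m * n.
Proof.
move=> /allP I_in; rewrite -{2}[m]subn0 -sum_nat_const_nat.
rewrite big_seq_cond [leqRHS]big_seq_cond.
apply: leq_sum => k /andP[]; rewrite mem_index_iota => /andP[_ lt_km] _.
apply/ltnW/absz_sub_blockB; apply/I_in/mem_nth; rewrite size_I // ltn_predL.
exact: leq_ltn_trans (leq0n k) lt_km.
Qed.

End ShiftToPartition.

Lemma card_Jprime_mul_le a n k I s : k.+1 <= n -> incr_in a n k.+1 I ->
  #|Jprime k.+1 s I| * (k.+1 ^ 2) ^ k <= 27 ^ k * (s ^ k + (k.+1 * n) ^ k).
Proof.
move=> le_mn [size_I [sorted_I I_in]].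
set T := s + \sum_(0 <= i < k.+1) gap k.+1 I i.
have T_le : T + k.+1 ^ 2 <= s + 2 * (k.+1 * n).
  have := sum_gap_le size_I I_in.
  have : k.+1 ^ 2 <= k.+1 * n by rewrite expnS expn1 leq_mul2l le_mn orbT.
  by rewrite /T; lia.
apply: leq_trans (leq_mul (card_Jprime_le s sorted_I size_I) (leqnn _)) _.
apply: leq_trans (size_partitions k T) _.
rewrite (expnMn 9 3) -mulnA leq_mul2l; apply/orP; right.
exact: leq_trans (leq_expn2r k T_le) (expnD_double_le s (k.+1 * n) k).
Qed.

Local Open Scope ring_scope.

Theorem lemma4p7 :
  exists C : Rdefinitions.R, 0 < C /\
  forall (a : int) (n m : nat) (I : seq int) (s : nat),
    (1 <= m)%N -> (m <= n)%N -> incr_in a n m I -> (1 <= s)%N ->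
    (#|Jprime m s I|%:R : Rdefinitions.R) <=
      (C / (m%:R ^+ 2)) ^+ m.-1 * (s%:R ^+ m.-1 + (m%:R * n%:R) ^+ m.-1).
Proof.
exists 27%:R; split; first by rewrite ltr0n.
move=> a n [//|k] I s _ le_mn I_incr _ /=.
have m2k_gt0 : 0 < (k.+1%:R ^+ 2) ^+ k :> Rdefinitions.R by rewrite !exprn_gt0 // ltr0n.
rewrite -(ler_pM2r m2k_gt0) expr_div_n mulrAC divfK ?gt_eqF //.
rewrite -!natrX -!natrM -!natrX -natrD -!natrM ler_nat.
exact: card_Jprime_mul_le le_mn I_incr.
Qed.
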